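(* Let $(\Omega,\mathcal F,\mathbb P)$ be a probability space and $u:\Omega\times\mathbb R\to\mathbb R$ satisfy: (i) for every $\omega$, $u(\omega,\cdot)$ is right continuous with left limits, nondecreasing, and $u(\omega,0)=0$; (ii) $u(\cdot,x)\in\mathcal L^1(\Omega,\mathcal F,\mathbb P)$ for every $x\in\mathbb R$; (iii) the functional $T_u(f):=\int_\Omega u(\omega,f(\omega))\,\mathbb P(d\omega)$ on $\mathcal L^\infty(\Omega,\mathcal F)$ is continuous from below, i.e. $T_u(f_n)\to T_u(f)$ whenever $f_n\in\mathcal L^\infty(\Omega,\mathcal F)$ and $f_n(\omega)\uparrow f(\omega)$ for every $\omega$, with $f\in\mathcal L^\infty(\Omega,\mathcal F)$. Then $A_{\mathrm{cont}}:=\{\omega\in\Omega: x\mapsto u(\omega,x)\text{ is continuous on }\mathbb R\}\in\mathcal F$ and $\mathbb P(A_{\mathrm{cont}})=1$.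
   Context: $\mathcal L^\infty(\Omega,\mathcal F)$: bounded $\mathcal F$-measurable real functions. *)

From HB Require Import structures.
From mathcomp Require Import all_boot all_order all_algebra.
From mathcomp Require Import all_classical all_reals all_analysis.
Set Implicit Arguments. Unset Strict Implicit. Unset Printing Implicit Defensive.
Import Order.TTheory GRing.Theory Num.Theory.
Import numFieldNormedType.Exports.
Local Open Scope classical_set_scope.
Local Open Scope ring_scope.

Definition Linfty d (T : measurableType d) (R : realType) (f : T -> R) : Prop :=
  measurable_fun setT f /\ exists M : R, forall w, `|f w| <= M.

Definition Tu d (T : measurableType d) (R : realType) (P : probability T R)
  (u : T -> R -> R) (f : T -> R) : \bar R :=
  (\int[P]_w (u w (f w))%:E)%E.

Definition Acont d (T : measurableType d) (R : realType) (u : T -> R -> R) : set T :=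
  [set w | continuous (u w)].

(* For a bounded measurable random time g, the times g - 1/(n+1) increase to
   g, so continuity from below and dominated convergence give E[u(g)] = E[u(g-)]; as u(g) - u(g-) >= 0, the
   jump of u(w, .) at g(w) vanishes almost surely.  Every discontinuity x of
   u(w, .) is the hitting time in [-N, N], N >= |x|, of a rational level strictly
   between u(w, x-) and u(w, x); these hitting times are measurable thanks to
   right continuity, and there are countably many of them. *)

From HB Require Import structures.
From mathcomp Require Import all_boot all_order all_algebra.
From mathcomp Require Import all_classical all_reals all_analysis.
From mathcomp Require Import lra measurable_realfun.
Set Implicit Arguments.
Unset Strict Implicit.
Unset Printing Implicit Defensive.

Import Order.TTheory GRing.Theory Num.Theory.
Import numFieldNormedType.Exports.
Local Open Scope classical_set_scope.
Local Open Scope ring_scope.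

Lemma normr_le_between (R : realDomainType) (a x b : R) :
  a <= x -> x <= b -> `|x| <= `|a| + `|b|.
Proof.
move=> ax xb; move: (ler_norm a) (ler_norm b) (ler_norm (- a)) (ler_norm (- b)).
rewrite !normrN.
by have [/ger0_norm->|/ltr0_norm->] := leP 0 x; lra.
Qed.

Lemma cvg_sub_harmonic (R : realType) (x : R) :
  x - n.+1%:R^-1 @[n --> \oo] --> x.
Proof.
rewrite -[X in _ --> X]subr0; apply: cvgB; [exact: cvg_cst|exact: cvg_harmonic].
Qed.

Section right_continuous_nondecreasing.
Variables (R : realType) (v : R -> R).
Hypothesis v_rc : forall x, v y @[y --> x^'+] --> v x.
Hypothesis v_nd : {homo v : x y / x <= y}.

Lemma right_continuous_lt x a b :
  v x < a -> x < b -> exists2 z, x < z < b & v z < a.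
Proof.
move=> vxa xb; move/cvgr_lt: (@v_rc x) => /(_ a vxa) vlt.
near (x^'+) => z; exists z; last by near: z.
by apply/andP; split; near: z; [exact: nbhs_right_gt|exact: nbhs_right_lt].
Unshelve. all: by end_near. Qed.

Lemma right_continuous_lt_rat x a :
  v x < a -> exists2 q : rat, x < ratr q & v (ratr q) < a.
Proof.
move=> vxa; have xx1 : x < x + 1 by rewrite ltrDl.
have [z /andP[xz _] vza] := right_continuous_lt vxa xx1.
have [q] := rat_in_itvoo xz; rewrite in_itv /= => /andP[xq qz].
by exists q => //; apply: le_lt_trans vza; apply: v_nd; exact: ltW.
Qed.

(* The first point of [-N, N] where [v] reaches [c], or [N] if there is none. *)
Definition hitting_set (c : R) (N : nat) : set R :=
  [set x | - N%:R <= x <= N%:R /\ c <= v x] `|` [set N%:R].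

Definition hitting_time c N := inf (hitting_set c N).

Lemma hitting_set_lbound c N : lbound (hitting_set c N) (- N%:R).
Proof.
by move=> x [[/andP[]]//|->]; apply: (@le_trans _ _ 0); rewrite ?oppr_le0.
Qed.

Lemma hitting_set_neq0 c N : hitting_set c N !=set0.
Proof. by exists N%:R; right. Qed.

Lemma hitting_time_le c N x : hitting_set c N x -> hitting_time c N <= x.
Proof.
by move=> cx; apply: ge_inf => //; exists (- N%:R); exact: hitting_set_lbound.
Qed.

Lemma hitting_time_itv c N : - N%:R <= hitting_time c N <= N%:R.
Proof.
apply/andP; split; last by apply: hitting_time_le; right.
by apply: lb_le_inf; [exact: hitting_set_neq0|exact: hitting_set_lbound].
Qed.

Lemma lbound_le_hitting_time c N z :
  z <= N%:R -> (forall x, c <= v x -> z <= x) -> z <= hitting_time c N.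
Proof.
move=> zN zc; apply: lb_le_inf; first exact: hitting_set_neq0.
by move=> x [[_ /zc]|->].
Qed.

Lemma lt_hitting_time c N t : - N%:R <= t < N%:R ->
  (t < hitting_time c N <-> v t < c).
Proof.
case/andP=> Nt tN; split=> [th|vtc].
  rewrite ltNge; apply/negP => ct.
  have : hitting_time c N <= t by apply: hitting_time_le; left; rewrite /= Nt ltW.
  by rewrite leNgt th.
have [z /andP[tz zN] vzc] := right_continuous_lt vtc tN.
apply: (lt_le_trans tz); apply: lbound_le_hitting_time; first exact: ltW.
move=> x cx; rewrite leNgt; apply/negP => xz.
by have := lt_le_trans (le_lt_trans (v_nd (ltW xz)) vzc) cx; rewrite ltxx.
Qed.

Lemma hitting_time_eq c N x : - N%:R <= x <= N%:R ->
  (forall z, z < x -> v z < c) -> c <= v x -> hitting_time c N = x.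
Proof.
move=> xN below cx; apply/eqP; rewrite eq_le; apply/andP; split.
  by apply: hitting_time_le; left.
apply: lbound_le_hitting_time; first by case/andP: xN.
by move=> y cy; rewrite leNgt; apply/negP => /below; rewrite ltNge cy.
Qed.
End right_continuous_nondecreasing.

Definition left_lim (R : realType) (v : R -> R) x := lim (v y @[y --> x^'-]).

Section left_limit.
Variables (R : realType) (v : R -> R).
Hypothesis v_rc : forall x, v y @[y --> x^'+] --> v x.
Hypothesis v_lc : forall x, cvg (v y @[y --> x^'-]).
Hypothesis v_nd : {homo v : x y / x <= y}.

Lemma left_lim_le x : left_lim v x <= v x.
Proof.
apply: limr_le; first exact: v_lc.
near=> y; apply: v_nd; near: y; exact: nbhs_left_le.
Unshelve. all: by end_near. Qed.

Lemma le_left_lim z x : z < x -> v z <= left_lim v x.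
Proof.
move=> zx; apply: limr_ge; first exact: v_lc.
near=> y; apply: v_nd; near: y; exact: nbhs_left_ge.
Unshelve. all: by end_near. Qed.

Lemma cvg_left_lim_shift x : v (x - n.+1%:R^-1) @[n --> \oo] --> left_lim v x.
Proof.
apply: (cvg_at_leftP v x (left_lim v x)).1; first exact: v_lc.
split=> [n|]; [by rewrite ltrBlDr ltrDl invr_gt0|exact: cvg_sub_harmonic].
Qed.

Lemma continuousP_left_lim : continuous v <-> forall x, left_lim v x = v x.
Proof.
split=> [vc x|vl x].
  by apply: cvg_lim => //; apply: cvg_within_filter; exact: vc.
by apply/left_right_continuousP; split; [rewrite -vl; exact: v_lc|exact: v_rc].
Qed.
End left_limit.

Lemma negligible_bigcup_rat d (T : measurableType d) (R : realType)
    (mu : {measure set T -> \bar R}) (F : rat -> set T) :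
  (forall q, mu.-negligible (F q)) -> mu.-negligible (\bigcup_q F q).
Proof.
move=> F0; apply: (@negligibleS _ _ _ _ (\bigcup_n F (odflt 0 (unpickle n)))).
  by move=> w [q _ Fqw]; exists (pickle q) => //; rewrite pickleK.
by apply: negligible_bigcup => n; exact: F0.
Qed.

Lemma measurable_set_gt0 d (T : measurableType d) (R : realType) (h : T -> R) :
  measurable_fun setT h -> measurable [set w | 0 < h w].
Proof.
move=> mh; rewrite -[X in measurable X]setTI.
rewrite (_ : [set w | _] = h @^-1` `]0, +oo[); first by apply: mh => //; exact: measurable_itv.
by apply/seteqP; split => w /=; rewrite in_itv /= andbT.
Qed.

Lemma ge0_integral_eq0_measure_gt0 d (T : measurableType d) (R : realType)
    (mu : {measure set T -> \bar R}) (h : T -> R) :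
  measurable_fun setT h -> (forall w, 0 <= h w) ->
  (\int[mu]_w (h w)%:E = 0)%E -> mu [set w | 0 < h w] = 0%E.
Proof.
move=> mh h0 ih0.
have mhE : measurable_fun setT (fun w => (h w)%:E) by exact/measurable_EFinP.
have [|N [mN N0 sub]] := (ae_eq_integral_abs mu measurableT mhE).1.
  by rewrite -ih0; apply: eq_integral => w _; rewrite abse_EFin ger0_norm.
apply: (subset_measure0 (measurable_set_gt0 mh) mN _ N0) => w /= hw.
by apply: sub => /= /(_ I) []; apply/eqP; rewrite gt_eqF.
Qed.

Section random_monotone_function.
Variables (d : measure_display) (T : measurableType d) (R : realType).
Variables (P : probability T R) (u : T -> R -> R).
Hypothesis u_rc : forall w x, u w y @[y --> x^'+] --> u w x.
Hypothesis u_lc : forall w x, cvg (u w y @[y --> x^'-]).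
Hypothesis u_nd : forall w, {homo u w : x y / x <= y}.
Hypothesis u_int : forall x, P.-integrable setT (fun w => (u w x)%:E).
Hypothesis Tu_cvg_from_below : forall (fn : nat -> T -> R) (f : T -> R),
  (forall n, Linfty (fn n)) -> Linfty f ->
  (forall w, {homo (fun n => fn n w) : n m / (n <= m)%N >-> n <= m}) ->
  (forall w, fn n w @[n --> \oo] --> f w) ->
  Tu P u (fn n) @[n --> \oo] --> Tu P u f.

Lemma measurable_fun_u x : measurable_fun setT (fun w => u w x).
Proof. by apply/measurable_EFinP; case/integrableP: (u_int x). Qed.

Lemma measurable_fun_u_comp g : measurable_fun setT g ->
  measurable_fun setT (fun w => u w (g w)).
Proof.
move=> mg; apply: (measurability _ (RGenInftyO.measurableE R)) => //.
move=> _ [_ [a ->] <-].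
rewrite (_ : _ `&` _ = \bigcup_(q : rat) ((setT `&` g @^-1` `]-oo, ratr q[) `&`
    (setT `&` (fun w => u w (ratr q)) @^-1` `]-oo, a[))).
  apply: bigcupT_measurable_rat => q; apply: measurableI.
    by apply: mg => //; exact: measurable_itv.
  by apply: measurable_fun_u => //; exact: measurable_itv.
apply/seteqP; split => w /=; rewrite !in_itv /=.
  move=> -[_ uga]; have [q gq uqa] := right_continuous_lt_rat (@u_rc w) (u_nd w) uga.
  by exists q => //=; rewrite !in_itv.
move=> [q _] /=; rewrite !in_itv /= => -[[_ gq] [_ uqa]]; split => //.
by apply: le_lt_trans uqa; apply: u_nd; exact: ltW.
Qed.

Lemma measurable_fun_left_lim_comp g : measurable_fun setT g ->
  measurable_fun setT (fun w => left_lim (u w) (g w)).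
Proof.
move=> mg; apply: (measurable_fun_cvg
  (h := fun n w => u w (g w - n.+1%:R^-1))) => [n|w _].
  by apply: measurable_fun_u_comp; apply: measurable_funB.
exact: cvg_left_lim_shift.
Qed.

Lemma measurable_fun_hitting_time c N :
  measurable_fun setT (fun w => hitting_time (u w) c N).
Proof.
apply: (measurability _ (RGenOInfty.measurableE R)) => //.
move=> _ [_ [t ->] <-].
have hb w := hitting_time_itv (u w) c N.
have [Nt|tN] := leP N%:R t.
  rewrite (_ : _ `&` _ = set0) //; apply/seteqP; split => // w /=.
  rewrite in_itv /= andbT => -[_ th]; have /andP[_ hN] := hb w.
  by move: (lt_le_trans th (le_trans hN Nt)); rewrite ltxx.
have [tN'|Nt] := ltP t (- N%:R).
  rewrite (_ : _ `&` _ = setT) //; apply/seteqP; split => // w /= _.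
  rewrite in_itv /= andbT; split => //; have /andP[Nh _] := hb w.
  exact: lt_le_trans tN' Nh.
have tNN : - N%:R <= t < N%:R by rewrite Nt tN.
rewrite (_ : _ `&` _ = setT `&` (fun w => u w t) @^-1` `]-oo, c[).
  by apply: measurable_fun_u => //; exact: measurable_itv.
apply/seteqP; split => w /=; rewrite !in_itv /= andbT => -[_ h]; split => //.
  exact: (lt_hitting_time (@u_rc w) (u_nd w) c tNN).1 h.
exact: (lt_hitting_time (@u_rc w) (u_nd w) c tNN).2 h.
Qed.

Lemma normr_u_le K w y : `|y| <= K -> `|u w y| <= `|u w (- K)| + `|u w K|.
Proof. by rewrite ler_norml => /andP[Ky yK]; apply: normr_le_between; apply: u_nd. Qed.

Lemma normr_left_lim_u_le K w y : `|y| <= K ->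
  `|left_lim (u w) y| <= `|u w (- (K + 1))| + `|u w (K + 1)|.
Proof.
rewrite ler_norml => /andP[Ky yK]; have y1 : y - 1 < y by lra.
apply: normr_le_between.
  by apply: (le_trans _ (le_left_lim (@u_lc w) (u_nd w) y1)); apply: u_nd; lra.
by apply: (le_trans (left_lim_le (@u_lc w) (u_nd w) y)); apply: u_nd; lra.
Qed.

Lemma integrable_envelope K :
  P.-integrable setT (fun w => `|(u w (- K))%:E| + `|(u w K)%:E|)%E.
Proof. by apply: integrableD => //; apply: integrable_abse; exact: u_int. Qed.

Lemma integrable_dominated (f : T -> R) K : measurable_fun setT f ->
  (forall w, `|f w| <= `|u w (- K)| + `|u w K|) ->
  P.-integrable setT (fun w => (f w)%:E).
Proof.
move=> mf fK; apply: le_integrable (integrable_envelope K) => //.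
  exact/measurable_EFinP.
by move=> w _; rewrite !abse_EFin lee_fin (le_trans (fK w)) ?ler_norm.
Qed.

Definition jump_set (g : T -> R) := [set w | left_lim (u w) (g w) < u w (g w)].

Section bounded_random_time.
Variables (g : T -> R) (K : R).
Hypothesis mg : measurable_fun setT g.
Hypothesis gK : forall w, `|g w| <= K.

Let shift n w := g w - n.+1%:R^-1.

Let shiftK n w : `|shift n w| <= K + 1.
Proof.
rewrite (le_trans (ler_normB _ _)) // lerD // ger0_norm ?invr_ge0 //.
by rewrite invf_le1 // ler1n.
Qed.

Let measurable_shift n : measurable_fun setT (shift n).
Proof. exact: measurable_funB. Qed.

Lemma cvg_Tu_shift_left_lim :
  Tu P u (shift n) @[n --> \oo] --> (\int[P]_w (left_lim (u w) (g w))%:E)%E.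
Proof.
have mu_shift n : measurable_fun setT (fun w => (u w (shift n w))%:E).
  exact/measurable_EFinP/measurable_fun_u_comp.
have mu_left_lim : measurable_fun setT (fun w => (left_lim (u w) (g w))%:E).
  exact/measurable_EFinP/measurable_fun_left_lim_comp.
have cvg_shift w : (u w (shift n w))%:E @[n --> \oo] --> (left_lim (u w) (g w))%:E.
  by apply: cvg_EFin; [exact: nearW|exact: cvg_left_lim_shift].
have bound w n : (`|(u w (shift n w))%:E| <=
    `|(u w (- (K + 1)))%:E| + `|(u w (K + 1))%:E|)%E.
  by rewrite !abse_EFin -EFinD lee_fin normr_u_le.
by have [] := dominated_convergence measurableT mu_shift mu_left_lim
  (aeW _ (fun w _ => cvg_shift w)) (integrable_envelope (K + 1)) (aeW _ (fun w n _ => bound w n)).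
Qed.

Lemma cvg_Tu_shift : Tu P u (shift n) @[n --> \oo] --> Tu P u g.
Proof.
apply: Tu_cvg_from_below.
- by move=> n; split => //; exists (K + 1); exact: shiftK.
- by split => //; exists K.
- by move=> w n m nm; rewrite /shift lerD2l lerN2 lef_pV2 ?posrE // ler_nat ltnS.
- by move=> w; exact: cvg_sub_harmonic.
Qed.

Let jump w := u w (g w) - left_lim (u w) (g w).

Let measurable_jump : measurable_fun setT jump.
Proof.
apply: measurable_funB; [exact: measurable_fun_u_comp|].
exact: measurable_fun_left_lim_comp.
Qed.

Let jump_setE : jump_set g = [set w | 0 < jump w].
Proof. by apply/seteqP; split => w /=; rewrite subr_gt0. Qed.

Lemma measurable_jump_set : measurable (jump_set g).
Proof. by rewrite jump_setE; exact: measurable_set_gt0. Qed.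

Lemma jump_set_null : P (jump_set g) = 0%E.
Proof.
rewrite jump_setE; apply: ge0_integral_eq0_measure_gt0 => // [w|].
  by rewrite subr_ge0 left_lim_le.
have iu : P.-integrable setT (fun w => (u w (g w))%:E).
  apply: (integrable_dominated (K := K)); first exact: measurable_fun_u_comp.
  by move=> w; exact: normr_u_le.
have il : P.-integrable setT (fun w => (left_lim (u w) (g w))%:E).
  apply: (integrable_dominated (K := K + 1)).
    exact: measurable_fun_left_lim_comp.
  by move=> w; exact: normr_left_lim_u_le.
rewrite integralB_EFin //.
rewrite (cvg_unique _ cvg_Tu_shift_left_lim cvg_Tu_shift) // subee //.
exact: integrable_fin_num.
Qed.
End bounded_random_time.

Lemma Acont_jump_sets : Acont u =
  ~` \bigcup_(q : rat) \bigcup_N jump_set (fun w => hitting_time (u w) (ratr q) N).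
Proof.
apply/seteqP; split => w /=.
  move/(continuousP_left_lim (@u_rc w) (@u_lc w)) => lim_eq [q _ [N _]].
  by rewrite /jump_set /= lim_eq ltxx.
move=> no_jump; apply/(continuousP_left_lim (@u_rc w) (@u_lc w)) => x.
apply/eqP; rewrite eq_le left_lim_le //=; rewrite leNgt; apply/negP => jump_x.
have [q] := rat_in_itvoo jump_x; rewrite in_itv /= => /andP[lq qu].
pose N := (Num.truncn `|x|).+1.
have xN : - N%:R <= x <= N%:R by rewrite -ler_norml ltW // truncnS_gt.
apply: no_jump; exists q => //; exists N => //.
rewrite /jump_set /= (hitting_time_eq xN) ?ltW //.
by move=> z zx; apply: le_lt_trans lq; exact: le_left_lim.
Qed.

End random_monotone_function.

Theorem mainTheorem14 (d : measure_display) (T : measurableType d) (R : realType)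
  (P : probability T R) (u : T -> R -> R) :
  (forall w : T,
      (forall x : R, u w y @[y --> x^'+] --> u w x) /\
      (forall x : R, cvg (u w y @[y --> x^'-])) /\
      {homo u w : x y / x <= y} /\
      u w 0 = 0) ->
  (forall x : R, P.-integrable setT (fun w => (u w x)%:E)) ->
  (forall (fn : nat -> T -> R) (f : T -> R),
      (forall n, Linfty (fn n)) -> Linfty f ->
      (forall w, {homo (fun n => fn n w) : n m / (n <= m)%N >-> n <= m}) ->
      (forall w, fn n w @[n --> \oo] --> f w) ->
      Tu P u (fn n) @[n --> \oo] --> Tu P u f) ->
  measurable (Acont u) /\ P (Acont u) = 1%E.
Proof.
move=> u_reg u_int Tu_cvg.
have u_rc w := (u_reg w).1; have u_lc w := (u_reg w).2.1.
have u_nd w := (u_reg w).2.2.1.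
pose J q N := jump_set u (fun w => hitting_time (u w) (ratr q) N).
have m_hit q N := measurable_fun_hitting_time u_rc u_nd u_int (ratr q) N.
have hit_le q N w : `|hitting_time (u w) (ratr q) N| <= N%:R.
  by rewrite ler_norml hitting_time_itv.
have mJ q N : measurable (J q N) := measurable_jump_set u_rc u_lc u_nd u_int (m_hit q N).
have J0 q N : P (J q N) = 0%E :=
  jump_set_null u_rc u_lc u_nd u_int Tu_cvg (m_hit q N) (hit_le q N).
have mU : measurable (\bigcup_q \bigcup_N J q N).
  by apply: bigcupT_measurable_rat => q; exact: bigcupT_measurable.
rewrite (Acont_jump_sets u_rc u_lc u_nd); split; first exact: measurableC.
rewrite probability_setC // (_ : P _ = 0%E) ?sube0 //; apply/negligibleP => //.
apply: negligible_bigcup_rat => q; apply: negligible_bigcup => N.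
by apply/(negligibleP _ (mJ q N)); exact: J0.
Qed.
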